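(* Let $\Lambda:=U(2)^{\oplus 3}\oplus E_8\oplus A_1^{\oplus 2}$ and let $u\in D_\Lambda=\Lambda^\vee/\Lambda$ satisfy $q(u)=1+2\mathbb{Z}$. Then there exists $x\in\Lambda$ with $x^2=-4$, $x.\Lambda=2\mathbb{Z}$ and $u=x/2+\Lambda$.
   Context: $U$ is the hyperbolic plane, $L(n)$ denotes $L$ with form scaled by $n$, ADE root lattices are negative definite. $q\colon D_\Lambda\to\mathbb{Q}/2\mathbb{Z}$ is the discriminant quadratic form $q(y+\Lambda)=y^2+2\mathbb{Z}$. *)

From HB Require Import structures.
From mathcomp Require Import all_boot all_order all_algebra.
Set Implicit Arguments. Unset Strict Implicit. Unset Printing Implicit Defensive.
Import Order.TTheory GRing.Theory Num.Theory.
Local Open Scope ring_scope.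

(* Lattices are given by integral Gram matrices on Z^n (column vectors). *)

Definition osum (m n : nat) (A : 'M[int]_m) (B : 'M[int]_n) : 'M[int]_(m + n) :=
  block_mx A 0 0 B.

Definition U2 : 'M[int]_2 := \matrix_(i < 2, j < 2) (if i == j then 0 else 2).

Definition A1 : 'M[int]_1 := \matrix_(i < 1, j < 1) (-2).

(* E_8, negative definite: minus the Cartan matrix (Bourbaki numbering,
   0-indexed: edges 0-2, 2-3, 3-4, 4-5, 5-6, 6-7, 1-3). *)
Definition E8_edge (i j : nat) : bool :=
  [|| (i, j) == (0, 2)%N, (i, j) == (2, 3)%N, (i, j) == (3, 4)%N,
      (i, j) == (4, 5)%N, (i, j) == (5, 6)%N, (i, j) == (6, 7)%N
    | (i, j) == (1, 3)%N].
Definition E8 : 'M[int]_8 :=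
  \matrix_(i < 8, j < 8)
    (if i == j then -2 else if E8_edge i j || E8_edge j i then 1 else 0).

Definition LamN : nat := (2 + (2 + 2)) + (8 + (1 + 1)).
Definition LamGram : 'M[int]_LamN :=
  osum (osum U2 (osum U2 U2)) (osum E8 (osum A1 A1)).

Definition bform (x y : 'cV[int]_LamN) : int := (x^T *m LamGram *m y) 0 0.
Definition bformQ (x y : 'cV[rat]_LamN) : rat :=
  (x^T *m map_mx intr LamGram *m y) 0 0.

Definition int_vec (v : 'cV[rat]_LamN) : Prop :=
  exists z : 'cV[int]_LamN, v = map_mx intr z.

Definition in_dual (y : 'cV[rat]_LamN) : Prop :=
  forall z : 'cV[int]_LamN, bformQ y (map_mx intr z) \is a Num.int.

From mathcomp Require Import all_boot all_order all_algebra.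
From mathcomp Require Import ring lra zify.
Set Implicit Arguments. Unset Strict Implicit. Unset Printing Implicit Defensive.
Import Order.TTheory GRing.Theory Num.Theory.
Local Open Scope ring_scope.

(* Since U(2) and A1 have 2-elementary discriminant groups and E8 is unimodular, 2y is a
   lattice vector x0 = (u1, u2, u3, 2v, c1, c2), and q(u) = x0^2/4.  We take
   x = (u1 + 2w, u2, u3, 2e, c1, c2): it differs from x0 by an element of 2Lambda, so
   x/2 - y lies in Lambda, and every vector of this shape pairs evenly with Lambda.  The
   norm is adjusted to -4 in two moves: lifting u1 modulo 2 changes its U(2)-norm by 8m or
   8m + 8 for any prescribed m, and an E8-vector e of norm -2 or -4 absorbs the
   difference; as e can be taken with e.z = 1, also x.Lambda = 2Z. *)

Section GramForm.
Variables (R : comNzRingType) (n : nat).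
Implicit Types (G : 'M[R]_n) (x z : 'cV[R]_n).

Definition gram G x z : R := (x^T *m G *m z) 0 0.

Lemma gramDl G x1 x2 z : gram G (x1 + x2) z = gram G x1 z + gram G x2 z.
Proof. by rewrite /gram linearD /= !mulmxDl mxE. Qed.

Lemma gramDr G x z1 z2 : gram G x (z1 + z2) = gram G x z1 + gram G x z2.
Proof. by rewrite /gram mulmxDr mxE. Qed.

Lemma gramZl G c x z : gram G (c *: x) z = c * gram G x z.
Proof. by rewrite /gram linearZ /= -!scalemxAl mxE. Qed.

Lemma gramZr G c x z : gram G x (c *: z) = c * gram G x z.
Proof. by rewrite /gram -scalemxAr mxE. Qed.

Lemma gram0r G x : gram G x 0 = 0.
Proof. by rewrite /gram mulmx0 mxE. Qed.

Lemma gram_delta G i j : gram G (delta_mx i 0) (delta_mx j 0) = G i j.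
Proof. by rewrite /gram trmx_delta -rowE -colE !mxE. Qed.

End GramForm.

Lemma gram_map (R : comNzRingType) n (A : 'M[int]_n) (u v : 'cV[int]_n) :
  gram (map_mx intr A) (map_mx intr u) (map_mx intr v) = (gram A u v)%:~R :> R.
Proof. by rewrite /gram map_trmx -!map_mxM mxE. Qed.

Lemma gram_block_diag (R : comNzRingType) m n (A : 'M[R]_m) (B : 'M[R]_n) a b c d :
  gram (block_mx A 0 0 B) (col_mx a b) (col_mx c d) = gram A a c + gram B b d.
Proof.
by rewrite /gram tr_col_mx mul_row_block !mulmx0 addr0 add0r mul_row_col mxE.
Qed.

Definition in_gram_dual n (G : 'M[int]_n) (a : 'cV[rat]_n) : Prop :=
  forall z : 'cV[int]_n, gram (map_mx intr G) a (map_mx intr z) \is a Num.int.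

Lemma in_gram_dual_osum m n (A : 'M[int]_m) (B : 'M[int]_n) a b :
  in_gram_dual (osum A B) (col_mx a b) -> in_gram_dual A a /\ in_gram_dual B b.
Proof.
rewrite /in_gram_dual /osum map_block_mx !map_mx0 => dual_ab; split=> z.
- by have := dual_ab (col_mx z 0); rewrite map_col_mx map_mx0 gram_block_diag gram0r addr0.
- by have := dual_ab (col_mx 0 z); rewrite map_col_mx map_mx0 gram_block_diag gram0r add0r.
Qed.

Lemma in_gram_dual_scale n (G H : 'M[int]_n) (c : int) (a : 'cV[rat]_n) :
  G *m H = c%:M -> in_gram_dual G a -> exists u : 'cV[int]_n, c%:~R *: a = map_mx intr u.
Proof.
move=> GH dual_a.
have aG_int j : (a^T *m map_mx intr G) 0 j \is a Num.int.
  by have := dual_a (delta_mx j 0); rewrite /gram map_delta_mx -colE mxE.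
have ca_int i : c%:~R * a i 0 \is a Num.int.
  have -> : c%:~R * a i 0 = (a^T *m map_mx intr G *m map_mx intr H) 0 i.
    by rewrite -mulmxA -map_mxM GH map_scalar_mx mul_mx_scalar !mxE mulrC.
  by rewrite mxE rpred_sum // => j _; rewrite rpredM // mxE rpred_int.
exists (map_mx Num.floor (c%:~R *: a)).
by apply/matrixP=> i j; rewrite ord1 !mxE floorK // -[_ * _]/((c%:~R *: a) i 0) mxE.
Qed.

Lemma gram_U2 (x z : 'cV[int]_2) : gram U2 x z = 2 * (x 0 0 * z 1 0 + x 1 0 * z 0 0).
Proof.
rewrite /gram !mxE !big_ord_recr !big_ord0 /= !mxE !big_ord_recr !big_ord0 /= !mxE /=.
have -> : widen_ord (m:=2) (leqnSn 1) ord_max = 0 by apply/val_inj.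
have -> : (ord_max : 'I_2) = 1 by apply/val_inj.
ring.
Qed.

Lemma gram_A1 (x z : 'cV[int]_1) : gram A1 x z = -2 * (x 0 0 * z 0 0).
Proof.
rewrite /gram !mxE big_ord1 !mxE; under eq_bigr do rewrite !mxE.
by rewrite big_ord1 ord1; ring.
Qed.

Lemma U2_mul_swap : U2 *m \matrix_(i < 2, j < 2) (i != j)%:R = 2%:M.
Proof.
apply/matrixP=> i j; rewrite !mxE !big_ord_recr big_ord0 /= !mxE.
by case: i => [[|[|//]] ?]; case: j => [[|[|//]] ?].
Qed.

Lemma A1_mul_opp1 : A1 *m (-1)%:M = 2%:M.
Proof. by apply/matrixP=> i j; rewrite !ord1 mul_mx_scalar !mxE. Qed.

Lemma int_even_or_odd (z : int) : exists u, z = 2 * u \/ z = 2 * u + 1.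
Proof.
exists (z %/ 2)%Z; have := divz_eq z 2; have := modz_ge0 z (isT : (2 : int) != 0).
have := ltz_pmod z (isT : (0 < (2 : int))); lia.
Qed.

Lemma lift_mod2_mul (P Q m : int) : exists a b (t : bool),
  (P + 2 * a) * (Q + 2 * b) = P * Q + 2 * m + (if t then 2 else 0).
Proof.
have [u [EP|EP]] := int_even_or_odd P; last first.
  by exists (- u), (u * Q + m), false; rewrite EP; ring.
have [v [EQ|EQ]] := int_even_or_odd Q; last first.
  by exists (v * P + m), (- v), false; rewrite EQ; ring.
have [r [Em|Em]] := int_even_or_odd m.
- by exists (1 - u), (u * v + r - v), false; rewrite EP EQ Em; ring.
- by exists (1 - u), (u * v + r + 1 - v), true; rewrite EP EQ Em; ring.
Qed.

Lemma U2_lift_norm (u : 'cV[int]_2) (m : int) : exists (w : 'cV[int]_2) (t : bool),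
  gram U2 (u + 2 *: w) (u + 2 *: w) = gram U2 u u + 8 * m + (if t then 8 else 0).
Proof.
have [a [b [t Eab]]] := lift_mod2_mul (u 0 0) (u 1 0) m.
exists (\col_i (if i == 0 then a else b)), t.
rewrite !gram_U2 !mxE /= [(u 1 0 + _) * _]mulrC Eab.
by case: t {Eab}; ring.
Qed.

Definition E8inv : 'M[int]_8 := \matrix_(i < 8, j < 8) nth 0 (nth [::] [::
  [:: -4; -5; -7; -10; -8; -6; -4; -2]; [:: -5; -8; -10; -15; -12; -9; -6; -3];
  [:: -7; -10; -14; -20; -16; -12; -8; -4]; [:: -10; -15; -20; -30; -24; -18; -12; -6];
  [:: -8; -12; -16; -24; -20; -15; -10; -5]; [:: -6; -9; -12; -18; -15; -12; -8; -4];
  [:: -4; -6; -8; -12; -10; -8; -6; -3]; [:: -2; -3; -4; -6; -5; -4; -3; -2]] i) j.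

Lemma E8_unimodular : E8 *m E8inv = 1%:M.
Proof.
apply/matrixP=> i j; rewrite !mxE; under eq_bigr do rewrite !mxE.
rewrite !big_ord_recr big_ord0 /=.
by case: i => [[|[|[|[|[|[|[|[|//]]]]]]]] ?]; case: j => [[|[|[|[|[|[|[|[|//]]]]]]]] ?].
Qed.

Lemma E8_even (v : 'cV[int]_8) : (2 %| gram E8 v v)%Z.
Proof.
pose N : 'M[int]_8 := \matrix_(i < 8, j < 8) (E8_edge i j)%:R.
have E8N : E8 = N + N^T - 2%:M.
  apply/matrixP=> i j; rewrite !mxE.
  by case: i => [[|[|[|[|[|[|[|[|//]]]]]]]] ?]; case: j => [[|[|[|[|[|[|[|[|//]]]]]]]] ?].
have NT : v^T *m N^T *m v = v^T *m N *m v.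
  have -> : v^T *m N^T *m v = (v^T *m N *m v)^T by rewrite !trmx_mul trmxK mulmxA.
  by apply/matrixP=> i j; rewrite !ord1 mxE.
rewrite /gram; have -> : v^T *m E8 *m v = 2 *: (v^T *m N *m v - v^T *m v).
  rewrite E8N mulmxBr mulmxDr mulmxBl mulmxDl NT mul_mx_scalar -scalemxAl.
  by rewrite scalerBr -[2 : int]/(1 + 1) !scalerDl !scale1r.
by apply/dvdzP; exists ((v^T *m N *m v - v^T *m v) 0 0); rewrite mxE mulrC.
Qed.

Lemma E8_short_vector (t : bool) : exists e z : 'cV[int]_8,
  gram E8 e e = (if t then -4 else -2) /\ gram E8 e z = 1.
Proof.
exists (if t then delta_mx 0 0 + delta_mx 1 0 else delta_mx 0 0), (delta_mx 2 0).
by case: t; rewrite ?gramDl ?gramDr !gram_delta !mxE.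
Qed.

Definition lam_vec (R : Type) (x1 x2 x3 : 'cV[R]_2) (xE : 'cV[R]_8) (x5 x6 : 'cV[R]_1)
  : 'cV[R]_LamN := col_mx (col_mx x1 (col_mx x2 x3)) (col_mx xE (col_mx x5 x6)).

Lemma lam_vec_split (R : Type) (x : 'cV[R]_LamN) :
  exists x1 x2 x3 xE x5 x6, x = lam_vec x1 x2 x3 xE x5 x6.
Proof.
rewrite -[x]vsubmxK -[usubmx x]vsubmxK -[dsubmx x]vsubmxK.
rewrite -[dsubmx (usubmx x)]vsubmxK -[dsubmx (dsubmx x)]vsubmxK.
by do 6 eexists.
Qed.

Lemma map_lam_vec (R S : Type) (f : R -> S) x1 x2 x3 xE x5 x6 :
  map_mx f (lam_vec x1 x2 x3 xE x5 x6)
  = lam_vec (map_mx f x1) (map_mx f x2) (map_mx f x3) (map_mx f xE) (map_mx f x5) (map_mx f x6).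
Proof. by rewrite /lam_vec !map_col_mx. Qed.

Lemma bform_lam x1 x2 x3 xE x5 x6 z1 z2 z3 zE z5 z6 :
  bform (lam_vec x1 x2 x3 xE x5 x6) (lam_vec z1 z2 z3 zE z5 z6)
  = gram U2 x1 z1 + gram U2 x2 z2 + gram U2 x3 z3 + gram E8 xE zE
    + gram A1 x5 z5 + gram A1 x6 z6.
Proof. by rewrite -[bform _ _]/(gram LamGram _ _) !gram_block_diag !addrA. Qed.

Lemma bformQ_half (x : 'cV[int]_LamN) :
  bformQ ((1 / 2) *: map_mx intr x) ((1 / 2) *: map_mx intr x) = (bform x x)%:~R / 4.
Proof.
rewrite -[bformQ _ _]/(gram (map_mx intr LamGram) _ _) gramZl gramZr gram_map.
by field.
Qed.

Lemma in_dual_half (y : 'cV[rat]_LamN) : in_dual y ->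
  exists u1 u2 u3 v c1 c2, y = (1 / 2) *: map_mx intr (lam_vec u1 u2 u3 (2 *: v) c1 c2).
Proof.
have [y1 [y2 [y3 [yE [y5 [y6 ->]]]]]] := lam_vec_split y.
move=> /in_gram_dual_osum[/in_gram_dual_osum[dual1 /in_gram_dual_osum[dual2 dual3]]]
       /in_gram_dual_osum[dualE /in_gram_dual_osum[dual5 dual6]].
have [u1 Eu1] := in_gram_dual_scale U2_mul_swap dual1.
have [u2 Eu2] := in_gram_dual_scale U2_mul_swap dual2.
have [u3 Eu3] := in_gram_dual_scale U2_mul_swap dual3.
have [v Ev] := in_gram_dual_scale E8_unimodular dualE.
have [c1 Ec1] := in_gram_dual_scale A1_mul_opp1 dual5.
have [c2 Ec2] := in_gram_dual_scale A1_mul_opp1 dual6.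
exists u1, u2, u3, v, c1, c2; apply: (@scalerI _ _ 2) => //.
rewrite scalerA (_ : 2 * (1 / 2) = 1) // scale1r.
rewrite map_lam_vec /lam_vec !scale_col_mx map_mxZ -Ev.
by rewrite -Eu1 -Eu2 -Eu3 -Ec1 -Ec2 scale1r.
Qed.

Lemma bform_lam_even u1 u2 u3 e c1 c2 z :
  (2 %| bform (lam_vec u1 u2 u3 (2 *: e) c1 c2) z)%Z.
Proof.
have [z1 [z2 [z3 [zE [z5 [z6 ->]]]]]] := lam_vec_split z.
by rewrite bform_lam !gram_U2 !gram_A1 gramZl; lia.
Qed.

Lemma half_map_shift n (x z : 'cV[int]_n) :
  (1 / 2) *: map_mx intr (x + 2 *: z) - (1 / 2) *: map_mx intr x = map_mx intr z :> 'cV[rat]_n.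
Proof.
rewrite map_mxD map_mxZ scalerDr addrAC subrr add0r scalerA.
by rewrite (_ : 1 / 2 * 2%:~R = 1 :> rat) // scale1r.
Qed.

(* u = y + Lambda with y in Lambda^v and q(u) = y^2 = 1 mod 2Z. *)
Theorem lemma3p3 (y : 'cV[rat]_LamN) :
  in_dual y ->
  (exists k : int, bformQ y y = 1 + 2 * k%:~R) ->
  exists x : 'cV[int]_LamN,
    [/\ bform x x = -4,
        (forall m : int, (exists z, bform x z = m) <-> (2 %| m)%Z)
      & int_vec ((1 / 2) *: map_mx intr x - y)].
Proof.
move=> /in_dual_half[u1 [u2 [u3 [v [c1 [c2 ->]]]]]] [k].
set x0 := lam_vec u1 u2 u3 (2 *: v) c1 c2.
rewrite bformQ_half => norm_y.
have norm_x0 : bform x0 x0 = 4 + 8 * k.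
  by apply: (@intr_inj rat); rewrite rmorphD rmorphM /=; move: norm_y; lra.
have /dvdzP[h norm_v] := E8_even v.
have [w [t norm_u1]] := U2_lift_norm u1 (h - k).
have [e [z [norm_e e_z]]] := E8_short_vector t.
exists (lam_vec (u1 + 2 *: w) u2 u3 (2 *: e) c1 c2); split.
- move: norm_x0; rewrite !bform_lam !gramZl !gramZr norm_u1 norm_e norm_v.
  by case: t {norm_u1 norm_e}; lia.
- move=> m; split=> [[z' <-]|/dvdzP[s ->]]; first exact: bform_lam_even.
  exists (lam_vec 0 0 0 (s *: z) 0 0).
  by rewrite bform_lam !gram0r gramZl gramZr e_z; ring.
- exists (lam_vec w 0 0 (e - v) 0 0).
  rewrite -(half_map_shift x0); congr (_ *: map_mx _ _ - _).
  rewrite /lam_vec !scale_col_mx !add_col_mx !scaler0 !addr0 scalerBr.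
  by rewrite subrKC.
Qed.
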